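(* Let $d\geq 2$ and let $\mathcal{H}_1,\mathcal{H}_2,\mathcal{H}_3,\mathcal{H}_4$ each be $\mathbb{C}^d$, with Alice holding $\mathcal{H}_A=\mathcal{H}_1\otimes\mathcal{H}_3$ and Bob holding $\mathcal{H}_B=\mathcal{H}_2\otimes\mathcal{H}_4$. For real $\epsilon,\delta$ let $$\rho=\mathbb{1}_{12}\otimes\mathbb{1}_{34}+\frac{\epsilon d-1}{d}\left(\mathbb{1}_{12}\otimes F_{34}+F_{12}\otimes\mathbb{1}_{34}\right)+\frac{1-2\epsilon d+\delta d^2}{d^2}F_{12}\otimes F_{34},$$ and assume $\rho$ is positive semidefinite. If either $$\Bigl(1-\frac{2}{d}\Bigr)^2+\min(4\epsilon,0)+\min(2\delta,0)\geq 0$$ or $$d^2+\min\bigl(4d(\epsilon d-1),0\bigr)+\min\bigl(2(\delta d^2-1),0\bigr)\geq 0,$$ then $\rho$ is 1-undistillable, i.e. $\langle\psi|\rho^{T_B}|\psi\rangle\geq 0$ for every vector $|\psi\rangle\in\mathcal{H}_A\otimes\mathcal{H}_B$ of Schmidt rank at most $2$ with respect to the split $A|B$.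
   Context: $F_{ij}$ denotes the swap operator $\sum_{k,l}|kl\rangle\langle lk|$ exchanging $\mathcal{H}_i$ and $\mathcal{H}_j$, and $\mathbb{1}_{ij}$ the identity on $\mathcal{H}_i\otimes\mathcal{H}_j$. $\rho^{T_B}$ denotes the partial transpose with respect to Bob's system $\mathcal{H}_2\otimes\mathcal{H}_4$ in the computational basis. *)

From HB Require Import structures.
From mathcomp Require Import all_boot all_order all_algebra.
From mathcomp Require Import complex.
Set Implicit Arguments. Unset Strict Implicit. Unset Printing Implicit Defensive.
Import Order.TTheory GRing.Theory Num.Theory.
Local Open Scope ring_scope.

(* Index of the 4-partite space H1 (x) H2 (x) H3 (x) H4, each C^d:
   a basis vector |k1 k2 k3 k4> is the tuple (k1, k2, k3, k4). *)
Definition idx4 (d : nat) : finType := ('I_d * 'I_d * 'I_d * 'I_d)%type.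
Definition i1 {d} (k : idx4 d) : 'I_d := k.1.1.1.
Definition i2 {d} (k : idx4 d) : 'I_d := k.1.1.2.
Definition i3 {d} (k : idx4 d) : 'I_d := k.1.2.
Definition i4 {d} (k : idx4 d) : 'I_d := k.2.

(* operators on H1 (x) H2 (x) H3 (x) H4 given by their matrix entries
   <k| X |l>, and vectors given by their coordinates *)
Definition op4 (C : Type) (d : nat) := idx4 d -> idx4 d -> C.
Definition vec4 (C : Type) (d : nat) := idx4 d -> C.

Definition delta (C : nzRingType) (n : nat) (a b : 'I_n) : C :=
  (a == b)%:R.

Section Ops.
Variables (C : numClosedFieldType) (d : nat).

Definition op_II : op4 C d := fun k l =>
  delta C (i1 k) (i1 l) * delta C (i2 k) (i2 l) *
  delta C (i3 k) (i3 l) * delta C (i4 k) (i4 l).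
(* 1_12 (x) F_34, with F_34 = sum |ab><ba| on H3 (x) H4 *)
Definition op_IF : op4 C d := fun k l =>
  delta C (i1 k) (i1 l) * delta C (i2 k) (i2 l) *
  delta C (i3 k) (i4 l) * delta C (i4 k) (i3 l).
Definition op_FI : op4 C d := fun k l =>
  delta C (i1 k) (i2 l) * delta C (i2 k) (i1 l) *
  delta C (i3 k) (i3 l) * delta C (i4 k) (i4 l).
Definition op_FF : op4 C d := fun k l =>
  delta C (i1 k) (i2 l) * delta C (i2 k) (i1 l) *
  delta C (i3 k) (i4 l) * delta C (i4 k) (i3 l).

Definition qform (X : op4 C d) (psi : vec4 C d) : C :=
  \sum_(k : idx4 d) \sum_(l : idx4 d) (psi k)^* * X k l * psi l.

Definition psd (X : op4 C d) : Prop := forall psi : vec4 C d, 0 <= qform X psi.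

(* partial transpose on Bob's system H2 (x) H4 in the computational basis:
   <k1 k2 k3 k4| X^{T_B} |l1 l2 l3 l4> = <k1 l2 k3 l4| X |l1 k2 l3 k4> *)
Definition ptB (X : op4 C d) : op4 C d := fun k l =>
  X (i1 k, i2 l, i3 k, i4 l) (i1 l, i2 k, i3 l, i4 k).

(* Schmidt rank at most n w.r.t. the split A = H1 (x) H3 | B = H2 (x) H4:
   psi = sum_{r<n} a_r (x) b_r with a_r in H_A, b_r in H_B *)
Definition schmidt_rank_le (n : nat) (psi : vec4 C d) : Prop :=
  exists (a : 'I_n -> 'I_d -> 'I_d -> C) (b : 'I_n -> 'I_d -> 'I_d -> C),
    forall k : idx4 d,
      psi k = \sum_(r < n) a r (i1 k) (i3 k) * b r (i2 k) (i4 k).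

Definition one_undistillable (X : op4 C d) : Prop :=
  forall psi : vec4 C d, schmidt_rank_le 2 psi -> 0 <= qform (ptB X) psi.
End Ops.

Local Open Scope complex_scope.
Definition rho (R : rcfType) (d : nat) (eps del : R) : op4 R[i] d :=
  let dR : R := d%:R in
  fun k l =>
    @op_II R[i] d k l
    + ((eps * dR - 1) / dR)%:C * (@op_IF R[i] d k l + @op_FI R[i] d k l)
    + ((1 - 2 * eps * dR + del * dR ^+ 2) / dR ^+ 2)%:C * @op_FF R[i] d k l.

From HB Require Import structures.
From mathcomp Require Import all_boot all_order all_algebra.
From mathcomp Require Import complex.
From mathcomp Require Import ring lra.
Set Implicit Arguments. Unset Strict Implicit. Unset Printing Implicit Defensive.
Import Order.TTheory GRing.Theory Num.Theory.
Local Open Scope ring_scope.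

(* For [psi] of Schmidt rank at most 2 write [X = |psi|^2], let [U] and [V] be
   the squared norms of the contractions of [psi] with the unnormalised maximally
   entangled vectors of H3 (x) H4 and of H1 (x) H2, and [S] the square of the
   full contraction. The partial transpose [P] of a swap is [d] times the
   projector onto the maximally entangled vector, so [<psi| rho^T_B |psi>] equals
   [X + (eps d - 1)/d (U + V) + (1 - 2 eps d + del d^2)/d^2 S].
   A matrix of rank at most 2 has [|tr M|^2 <= 2 |M|^2], which gives
   [U, S <= 2 X]; Cauchy-Schwarz gives [2 S <= d (U + V)]; and expanding
   [(2 - P12) (x) (d - P34)] over product vectors of H3 (x) H4 gives
   [d (U + V) - S <= (4 d - 4) X]. On the region cut out by these inequalities
   the combination is nonnegative under either hypothesis on [eps] and [del]. *)

Section FiniteSums.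
Variable C : numClosedFieldType.
Implicit Types (I : finType).

Lemma sum_sqr_norm_ge0 I (x : I -> C) : 0 <= \sum_i `|x i| ^+ 2.
Proof. by apply: sumr_ge0 => i _; rewrite exprn_ge0. Qed.

Lemma sum_sqr_norm_eq0 I (x : I -> C) : \sum_i `|x i| ^+ 2 = 0 -> forall i, x i = 0.
Proof.
move=> S0 i; apply/eqP; rewrite -normr_eq0 -sqrf_eq0; apply/eqP.
by rewrite (psumr_eq0P _ S0) // => j _; rewrite exprn_ge0.
Qed.

Lemma sum_symmetrize I (F : I -> I -> C) :
  \sum_i \sum_j (F i j + F j i) = 2 * \sum_i \sum_j F i j.
Proof.
under eq_bigr do rewrite big_split.
by rewrite big_split /= [X in _ + X]exchange_big mulr_natl mulr2n.
Qed.

Lemma sqr_norm_sum I (x : I -> C) :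
  `|\sum_i x i| ^+ 2 = \sum_i \sum_j x i * (x j)^*.
Proof. by rewrite normCK rmorph_sum big_distrlr. Qed.

Lemma Lagrange_identity I (x y : I -> C) :
  \sum_i \sum_j `|x i * (y j)^* - x j * (y i)^*| ^+ 2 =
  2 * ((\sum_i `|x i| ^+ 2) * (\sum_i `|y i| ^+ 2) - `|\sum_i x i * y i| ^+ 2).
Proof.
pose F i j := `|x i| ^+ 2 * `|y j| ^+ 2 - x i * y i * (x j * y j)^*.
transitivity (\sum_i \sum_j (F i j + F j i)).
  by do 2!apply: eq_bigr => ? _; rewrite /F !normCK !rmorphB !rmorphM /= !conjCK; ring.
rewrite sum_symmetrize sqr_norm_sum big_distrlr /= -sumrB.
by congr (2 * _); apply: eq_bigr => i _; rewrite -sumrB.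
Qed.

Lemma CauchySchwarz_sum I (x y : I -> C) :
  `|\sum_i x i * y i| ^+ 2 <= (\sum_i `|x i| ^+ 2) * (\sum_i `|y i| ^+ 2).
Proof.
rewrite -subr_ge0 -(@pmulr_rge0 _ 2) // -Lagrange_identity.
by apply: sumr_ge0 => i _; apply: sum_sqr_norm_ge0.
Qed.

Lemma sum_sqr_norm_sub I (x : I -> C) :
  \sum_i \sum_j `|x i - x j| ^+ 2 =
  2 * (#|I|%:R * \sum_i `|x i| ^+ 2 - `|\sum_i x i| ^+ 2).
Proof.
pose F i j := `|x i| ^+ 2 - x i * (x j)^*.
transitivity (\sum_i \sum_j (F i j + F j i)).
  by do 2!apply: eq_bigr => ? _; rewrite /F !normCK rmorphB /=; ring.
rewrite sum_symmetrize sqr_norm_sum mulr_sumr -sumrB; congr (2 * _).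
by apply: eq_bigr => i _; rewrite sumrB sumr_const mulr_natl.
Qed.

Lemma sqr_norm_sum_le_card I (x : I -> C) :
  `|\sum_i x i| ^+ 2 <= #|I|%:R * \sum_i `|x i| ^+ 2.
Proof.
rewrite -subr_ge0 -(@pmulr_rge0 _ 2) // -sum_sqr_norm_sub.
by apply: sumr_ge0 => i _; apply: sum_sqr_norm_ge0.
Qed.

Lemma sqr_normD_le (a b : C) : `|a + b| ^+ 2 <= 2 * `|a| ^+ 2 + 2 * `|b| ^+ 2.
Proof.
rewrite -subr_ge0 (_ : _ - _ = `|a - b| ^+ 2) ?exprn_ge0 //.
by rewrite !normCK !rmorphD rmorphN /=; ring.
Qed.

(* The four phases are the fourth roots of unity [al] paired with [be = - al^-1];
   averaging over them kills every cross term. *)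
Lemma sqr_norm_four_phases (p q r t : C) :
  `|p + (-1) * q + 1 * r - t| ^+ 2 + `|p + 'i * q + 'i * r - t| ^+ 2
  + `|p + 1 * q + (-1) * r - t| ^+ 2 + `|p + (- 'i) * q + (- 'i) * r - t| ^+ 2
  = 4 * (`|p - t| ^+ 2 + `|q| ^+ 2 + `|r| ^+ 2).
Proof.
have ii : 'i * 'i = -1 :> C by rewrite -expr2 sqrCi.
rewrite !normCK !rmorphB !rmorphD !rmorphM !rmorphN /= conjCi rmorph1.
transitivity (4 * ((p - t) * (p^* - t^*) + q * q^* + r * r^*)
              + ('i * 'i + 1) * (-2 * (q + r) * (q^* + r^*))); first ring.
by rewrite ii addNr mul0r addr0.
Qed.

Lemma sum4_exchange (I1 I2 I3 I4 : finType) (F : I1 -> I2 -> I3 -> I4 -> C) :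
  \sum_x \sum_y \sum_z \sum_w F x y z w = \sum_z \sum_w \sum_x \sum_y F x y z w.
Proof.
under eq_bigr do rewrite exchange_big; rewrite exchange_big.
by apply: eq_bigr => z _; under eq_bigr do rewrite exchange_big; rewrite exchange_big.
Qed.

Lemma sum_pair (I1 I2 : finType) (F : I1 * I2 -> C) :
  \sum_p F p = \sum_i \sum_j F (i, j).
Proof. by rewrite pair_big; apply: eq_bigr => -[]. Qed.

Lemma sum3_rotate (I1 I2 I3 : finType) (F : I1 -> I2 -> I3 -> C) :
  \sum_x \sum_y \sum_z F x y z = \sum_y \sum_z \sum_x F x y z.
Proof. by rewrite exchange_big; apply: eq_bigr => y _; rewrite exchange_big. Qed.

End FiniteSums.

Section Defect.
Variables (C : numClosedFieldType) (I : finType).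
Implicit Types (M N P Q R T : I -> I -> C) (x y : I -> C).

Definition sqnorm M := \sum_i \sum_j `|M i j| ^+ 2.
Definition trace M := \sum_i M i i.
(* [defect M = <M| 2 - P |M>], where [P] is the partial transpose of the swap
   on C^I (x) C^I. *)
Definition defect M := 2 * sqnorm M - `|trace M| ^+ 2.

Lemma eq_defect M N : (forall i j, M i j = N i j) -> defect M = defect N.
Proof.
move=> MN; rewrite /defect /sqnorm /trace.
by under eq_bigr do under eq_bigr do rewrite MN; under [\sum_i M i i]eq_bigr do rewrite MN.
Qed.

Lemma defect0 : defect (fun _ _ => 0) = 0.
Proof.
by rewrite /defect /sqnorm /trace !big1 ?normr0 ?expr0n ?mulr0 ?subr0.
Qed.

Lemma sqnorm_rank2_orth x1 x2 y1 y2 :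
  \sum_j (y1 j)^* * y2 j = 0 ->
  sqnorm (fun i j => x1 i * y1 j + x2 i * y2 j) =
  (\sum_i `|x1 i| ^+ 2) * (\sum_j `|y1 j| ^+ 2)
  + (\sum_i `|x2 i| ^+ 2) * (\sum_j `|y2 j| ^+ 2).
Proof.
move=> orth; have orth' : \sum_j y1 j * (y2 j)^* = 0.
  apply/eqP; rewrite -conjC_eq0 rmorph_sum /=; apply/eqP; rewrite -[RHS]orth.
  by apply: eq_bigr => j _; rewrite rmorphM /= conjCK.
rewrite /sqnorm; transitivity (\sum_i \sum_j
    (`|x1 i| ^+ 2 * `|y1 j| ^+ 2 + (x2 i * (x1 i)^*) * ((y1 j)^* * y2 j)
     + (x1 i * (x2 i)^*) * (y1 j * (y2 j)^*) + `|x2 i| ^+ 2 * `|y2 j| ^+ 2)).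
  by do 2!apply: eq_bigr => ? _; rewrite !normCK rmorphD !rmorphM /=; ring.
under eq_bigr do rewrite !big_split /=.
by rewrite !big_split /= -!big_distrlr /= orth orth' !mulr0 !addr0.
Qed.

(* Gram-Schmidt: replacing [y2] by its component orthogonal to [y1] keeps the
   matrix, and for orthogonal [y1, y2] both sides split into two rank-one terms. *)
Lemma defect_rank2_ge0 M x1 x2 y1 y2 :
  (forall i j, M i j = x1 i * y1 j + x2 i * y2 j) -> 0 <= defect M.
Proof.
move=> /eq_defect ->.
pose c := (\sum_j (y1 j)^* * y2 j) / \sum_j `|y1 j| ^+ 2.
pose x1' i := x1 i + c * x2 i; pose y2' j := y2 j - c * y1 j.
have orth : \sum_j (y1 j)^* * y2' j = 0.
  have [y10|y1N0] := eqVneq (\sum_j `|y1 j| ^+ 2) 0.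
    by rewrite big1 // => j _; rewrite (sum_sqr_norm_eq0 y10) conjC0 mul0r.
  rewrite /y2'; under eq_bigr do rewrite mulrBr mulrCA.
  rewrite sumrB -mulr_sumr.
  rewrite (_ : \sum_j (y1 j)^* * y1 j = \sum_j `|y1 j| ^+ 2) ?divfK ?subrr //.
  by apply: eq_bigr => j _; rewrite normCK mulrC.
rewrite (@eq_defect _ (fun i j => x1' i * y1 j + x2 i * y2' j)); last first.
  by move=> i j; rewrite /x1' /y2'; ring.
rewrite /defect sqnorm_rank2_orth // subr_ge0 /trace big_split /=.
apply: le_trans (sqr_normD_le _ _) _.
by rewrite mulrDr lerD // ler_wpM2l // CauchySchwarz_sum.
Qed.

Lemma trace_sqr_norm_le M : `|trace M| ^+ 2 <= #|I|%:R * sqnorm M.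
Proof.
apply: le_trans (sqr_norm_sum_le_card _) _; rewrite ler_wpM2l // ler_sum // => i _.
by rewrite (bigD1 i) //= lerDl sumr_ge0 // => j _; rewrite exprn_ge0.
Qed.

Lemma defect_four_phases P Q R T :
  let D al be := defect (fun i j => P i j + al * Q i j + be * R i j - T i j) in
  D (-1) 1 + D 'i 'i + D 1 (-1) + D (- 'i) (- 'i) =
  4 * (defect (fun i j => P i j - T i j) + defect Q + defect R).
Proof.
pose S al be := sqnorm (fun i j => P i j + al * Q i j + be * R i j - T i j).
have sqnormE : S (-1) 1 + S 'i 'i + S 1 (-1) + S (- 'i) (- 'i) =
    4 * (sqnorm (fun i j => P i j - T i j) + sqnorm Q + sqnorm R).
  rewrite /S /sqnorm -!big_split /= mulr_sumr; apply: eq_bigr => i _.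
  by rewrite -!big_split /= mulr_sumr; apply: eq_bigr => j _; apply: sqr_norm_four_phases.
have traceE al be : trace (fun i j => P i j + al * Q i j + be * R i j - T i j) =
    trace P + al * trace Q + be * trace R - trace T.
  by rewrite /trace sumrB !big_split /= -!mulr_sumr.
move=> D; rewrite /D /defect !traceE /trace sumrB -/(trace P) -/(trace T).
transitivity (2 * (4 * (sqnorm (fun i j => P i j - T i j) + sqnorm Q + sqnorm R))
  - 4 * (`|trace P - trace T| ^+ 2 + `|trace Q| ^+ 2 + `|trace R| ^+ 2)); last ring.
by rewrite -sqnormE -sqr_norm_four_phases /S; ring.
Qed.

Lemma sum_defect_sub (J : finType) (M : J -> I -> I -> C) :
  \sum_m \sum_n defect (fun i j => M m i j - M n i j) =
  2 * (#|J|%:R * \sum_m defect (M m) - defect (fun i j => \sum_m M m i j)).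
Proof.
have sqnormE : \sum_m \sum_n sqnorm (fun i j => M m i j - M n i j) =
    2 * (#|J|%:R * \sum_m sqnorm (M m) - sqnorm (fun i j => \sum_m M m i j)).
  rewrite /sqnorm sum4_exchange.
  under eq_bigr do under eq_bigr do rewrite sum_sqr_norm_sub.
  rewrite sum3_rotate mulrBr mulrA.
  rewrite [in RHS]mulr_sumr [in RHS]mulr_sumr -sumrB; apply: eq_bigr => i _.
  by rewrite [in RHS]mulr_sumr [in RHS]mulr_sumr -sumrB; apply: eq_bigr => j _; ring.
have traceE : \sum_m \sum_n `|trace (fun i j => M m i j - M n i j)| ^+ 2 =
    2 * (#|J|%:R * \sum_m `|trace (M m)| ^+ 2 - `|trace (fun i j => \sum_m M m i j)| ^+ 2).
  rewrite {3}/trace [in RHS]exchange_big /= -sum_sqr_norm_sub.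
  by do 2!apply: eq_bigr => ? _; rewrite /trace sumrB.
rewrite /defect; under eq_bigr do rewrite sumrB -mulr_sumr.
rewrite sumrB -mulr_sumr sqnormE traceE sumrB -mulr_sumr; ring.
Qed.

End Defect.

Section PartialTranspose.
Variables (C : numClosedFieldType) (d : nat) (psi : vec4 C d).
Local Notation p i1 i2 i3 i4 := (psi (i1, i2, i3, i4)).

Definition contr34 i1 i2 := \sum_m p i1 i2 m m.
Definition contr12 i3 i4 := \sum_m p m m i3 i4.

Lemma sum_idx4 (F : idx4 d -> C) :
  \sum_k F k = \sum_k1 \sum_k2 \sum_k3 \sum_(k4 : 'I_d) F (k1, k2, k3, k4).
Proof. by rewrite !sum_pair. Qed.

Lemma sum_delta (I : finType) (i : I) (F : I -> C) : \sum_j (i == j)%:R * F j = F i.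
Proof.
rewrite (bigD1 i) //= eqxx mul1r big1 ?addr0 // => j /negPf.
by rewrite eq_sym => ->; rewrite mul0r.
Qed.

Lemma sum_delta_diag (G : 'I_d -> 'I_d -> C) :
  \sum_a \sum_b (a == b)%:R * G a b = \sum_m G m m.
Proof. by apply: eq_bigr => a _; rewrite sum_delta. Qed.

Lemma qformE (X : op4 C d) :
  qform X psi = \sum_k (psi k)^* * \sum_l X k l * psi l.
Proof.
by apply: eq_bigr => k _; rewrite mulr_sumr; apply: eq_bigr => l _; rewrite mulrA.
Qed.

Lemma ptB_II_mul (k : idx4 d) : \sum_l ptB (@op_II C d) k l * psi l = psi k.
Proof.
rewrite -[RHS]sum_delta; apply: eq_bigr => l _; congr (_ * _).
case: k l => [[[k1 k2] k3] k4] [[[l1 l2] l3] l4].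
rewrite /ptB /op_II /delta /= !xpair_eqE (eq_sym l2) (eq_sym l4).
by case: (k1 == l1); case: (k2 == l2); case: (k3 == l3); case: (k4 == l4);
  rewrite /= ?mul1r ?mul0r ?mulr0.
Qed.

Lemma ptB_IF_mul (k : idx4 d) : \sum_l ptB (@op_IF C d) k l * psi l =
  (i3 k == i4 k)%:R * contr34 (i1 k) (i2 k).
Proof.
case: k => [[[k1 k2] k3] k4]; rewrite sum_idx4 /=.
transitivity (\sum_l1 (k1 == l1)%:R * \sum_l2 (k2 == l2)%:R *
   ((k3 == k4)%:R * \sum_l3 \sum_l4 (l3 == l4)%:R * p l1 l2 l3 l4)).
  apply: eq_bigr => l1 _; rewrite mulr_sumr; apply: eq_bigr => l2 _.
  rewrite !mulr_sumr; apply: eq_bigr => l3 _; rewrite !mulr_sumr; apply: eq_bigr => l4 _.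
  by rewrite /ptB /op_IF /delta /= (eq_sym l2) (eq_sym l4); ring.
by under eq_bigr do under eq_bigr do rewrite sum_delta_diag; rewrite !sum_delta.
Qed.

Lemma ptB_FI_mul (k : idx4 d) : \sum_l ptB (@op_FI C d) k l * psi l =
  (i1 k == i2 k)%:R * contr12 (i3 k) (i4 k).
Proof.
case: k => [[[k1 k2] k3] k4]; rewrite sum_idx4 /=.
transitivity ((k1 == k2)%:R * \sum_l1 \sum_l2 (l1 == l2)%:R *
   (\sum_l3 (k3 == l3)%:R * \sum_l4 (k4 == l4)%:R * p l1 l2 l3 l4)).
  rewrite mulr_sumr; apply: eq_bigr => l1 _; rewrite !mulr_sumr; apply: eq_bigr => l2 _.
  rewrite !mulr_sumr; apply: eq_bigr => l3 _; rewrite !mulr_sumr; apply: eq_bigr => l4 _.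
  by rewrite /ptB /op_FI /delta /= (eq_sym l2) (eq_sym l4); ring.
by under eq_bigr do under eq_bigr do rewrite !sum_delta; rewrite sum_delta_diag.
Qed.

Lemma ptB_FF_mul (k : idx4 d) : \sum_l ptB (@op_FF C d) k l * psi l =
  (i1 k == i2 k)%:R * ((i3 k == i4 k)%:R * trace contr12).
Proof.
case: k => [[[k1 k2] k3] k4]; rewrite sum_idx4 /=.
transitivity ((k1 == k2)%:R * ((k3 == k4)%:R * \sum_l1 \sum_l2 (l1 == l2)%:R *
   (\sum_l3 \sum_l4 (l3 == l4)%:R * p l1 l2 l3 l4))).
  rewrite !mulr_sumr; apply: eq_bigr => l1 _; rewrite !mulr_sumr; apply: eq_bigr => l2 _.
  rewrite !mulr_sumr; apply: eq_bigr => l3 _; rewrite !mulr_sumr; apply: eq_bigr => l4 _.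
  by rewrite /ptB /op_FF /delta /= (eq_sym l2) (eq_sym l4); ring.
rewrite sum_delta_diag; under eq_bigr do rewrite sum_delta_diag.
by rewrite /trace /contr12 exchange_big.
Qed.

Lemma qform_ptB_II : qform (ptB (@op_II C d)) psi = \sum_k `|psi k| ^+ 2.
Proof. by rewrite qformE; apply: eq_bigr => k _; rewrite ptB_II_mul normCK mulrC. Qed.

Lemma sum_conj_diag34 (f : 'I_d -> 'I_d -> C) :
  \sum_k (psi k)^* * ((i3 k == i4 k)%:R * f (i1 k) (i2 k)) =
  \sum_a \sum_b (contr34 a b)^* * f a b.
Proof.
rewrite sum_idx4; apply: eq_bigr => a _; apply: eq_bigr => b _ /=.
transitivity (\sum_k3 \sum_k4 (k3 == k4)%:R * ((p a b k3 k4)^* * f a b)).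
  by do 2!apply: eq_bigr => ? _; rewrite mulrCA.
by rewrite sum_delta_diag -mulr_suml -rmorph_sum.
Qed.

Lemma sum_conj_diag12 (g : 'I_d -> 'I_d -> C) :
  \sum_k (psi k)^* * ((i1 k == i2 k)%:R * g (i3 k) (i4 k)) =
  \sum_a \sum_b (contr12 a b)^* * g a b.
Proof.
rewrite sum_idx4 /=.
transitivity (\sum_k1 \sum_k2 (k1 == k2)%:R * \sum_a \sum_b (p k1 k2 a b)^* * g a b).
  do 2!apply: eq_bigr => ? _; rewrite !mulr_sumr; apply: eq_bigr => a _.
  by rewrite !mulr_sumr; apply: eq_bigr => b _; rewrite mulrCA.
rewrite sum_delta_diag sum3_rotate; do 2!apply: eq_bigr => ? _.
by rewrite -mulr_suml -rmorph_sum.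
Qed.

Lemma qform_ptB_IF : qform (ptB (@op_IF C d)) psi = sqnorm contr34.
Proof.
rewrite qformE; under eq_bigr do rewrite ptB_IF_mul.
by rewrite sum_conj_diag34; do 2!apply: eq_bigr => ? _; rewrite normCK mulrC.
Qed.

Lemma qform_ptB_FI : qform (ptB (@op_FI C d)) psi = sqnorm contr12.
Proof.
rewrite qformE; under eq_bigr do rewrite ptB_FI_mul.
by rewrite sum_conj_diag12; do 2!apply: eq_bigr => ? _; rewrite normCK mulrC.
Qed.

Lemma qform_ptB_FF : qform (ptB (@op_FF C d)) psi = `|trace contr12| ^+ 2.
Proof.
rewrite qformE; under eq_bigr do rewrite ptB_FF_mul.
rewrite (sum_conj_diag12 (fun a b => (a == b)%:R * trace contr12)).
under eq_bigr do under eq_bigr do rewrite mulrCA.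
by rewrite sum_delta_diag -mulr_suml -rmorph_sum normCK mulrC.
Qed.

Lemma qform_ptB_comb (c1 c2 : C) :
  qform (ptB (fun k l => @op_II C d k l + c1 * (@op_IF C d k l + @op_FI C d k l)
                         + c2 * @op_FF C d k l)) psi =
  \sum_k `|psi k| ^+ 2 + c1 * (sqnorm contr34 + sqnorm contr12)
  + c2 * `|trace contr12| ^+ 2.
Proof.
rewrite -qform_ptB_II -qform_ptB_IF -qform_ptB_FI -qform_ptB_FF /qform.
rewrite !mulrDr !mulr_sumr -!big_split; apply: eq_bigr => k _.
by rewrite !mulr_sumr -!big_split; apply: eq_bigr => l _; rewrite /ptB /=; ring.
Qed.

Lemma trace_contr34 : trace contr34 = trace contr12.
Proof. exact: exchange_big. Qed.

Lemma sqr_norm_trace_contr12_le_sqnorm :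
  2 * `|trace contr12| ^+ 2 <= d%:R * (sqnorm contr34 + sqnorm contr12).
Proof.
rewrite mulrDr mulr_natl mulr2n -[d in d%:R]card_ord.
by rewrite lerD ?trace_sqr_norm_le // -trace_contr34 trace_sqr_norm_le.
Qed.

End PartialTranspose.

Section SchmidtRank2.
Variables (C : numClosedFieldType) (d : nat) (psi : vec4 C d).
Variables (a b : 'I_2 -> 'I_d -> 'I_d -> C).
Hypothesis psiE :
  forall k, psi k = \sum_(r < 2) a r (i1 k) (i3 k) * b r (i2 k) (i4 k).
Local Notation p i1 i2 i3 i4 := (psi (i1, i2, i3, i4)).
Local Notation X := (\sum_k `|psi k| ^+ 2).
Local Notation U := (sqnorm (contr34 psi)).
Local Notation V := (sqnorm (contr12 psi)).
Local Notation S := (`|trace (contr12 psi)| ^+ 2).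

Lemma psi_rank2 i1 i2 i3 i4 :
  p i1 i2 i3 i4 = a ord0 i1 i3 * b ord0 i2 i4 + a ord_max i1 i3 * b ord_max i2 i4.
Proof.
by rewrite psiE big_ord_recl big_ord1 (_ : lift ord0 ord0 = ord_max) //; apply: val_inj.
Qed.

Lemma sqnorm_contr34_le : U <= 2 * X.
Proof.
rewrite sum_idx4 /sqnorm mulr_sumr ler_sum // => i1 _; rewrite mulr_sumr ler_sum // => i2 _.
rewrite -subr_ge0; apply: (@defect_rank2_ge0 _ _ (fun i3 i4 => p i1 i2 i3 i4)
  (a ord0 i1) (a ord_max i1) (b ord0 i2) (b ord_max i2)) => i3 i4.
exact: psi_rank2.
Qed.

Lemma sqr_norm_trace_contr12_le : S <= 2 * X.
Proof.
pose N (u v : 'I_d * 'I_d) := p u.1 v.1 u.2 v.2.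
have -> : trace (contr12 psi) = trace N.
  by rewrite /trace sum_pair exchange_big.
have -> : X = sqnorm N.
  rewrite sum_idx4 /sqnorm sum_pair; apply: eq_bigr => i1 _.
  by rewrite exchange_big; apply: eq_bigr => i3 _; rewrite sum_pair.
rewrite -subr_ge0; apply: (@defect_rank2_ge0 _ _ N
  (fun u => a ord0 u.1 u.2) (fun u => a ord_max u.1 u.2)
  (fun v => b ord0 v.1 v.2) (fun v => b ord_max v.1 v.2)) => u v.
exact: psi_rank2.
Qed.

(* Contracting [psi] on H3 (x) H4 with a product vector keeps Schmidt rank 2
   on H1 | H2. *)
Lemma defect_product_contraction_ge0 m n (x0 x1 y0 y1 : C) :
  0 <= defect (fun i j => x0 * y0 * p i j m m + x0 * y1 * p i j m n
                          + x1 * y0 * p i j n m + x1 * y1 * p i j n n).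
Proof.
apply: (defect_rank2_ge0 (x1 := fun i => x0 * a ord0 i m + x1 * a ord0 i n)
  (x2 := fun i => x0 * a ord_max i m + x1 * a ord_max i n)
  (y1 := fun j => y0 * b ord0 j m + y1 * b ord0 j n)
  (y2 := fun j => y0 * b ord_max j m + y1 * b ord_max j n)) => i j.
by rewrite !psi_rank2; ring.
Qed.

Lemma defect_block_ge0 m n : 0 <= defect (fun i j => p i j m n).
Proof.
rewrite (eq_defect (N := fun i j => 1 * 0 * p i j m m + 1 * 1 * p i j m n
                                   + 0 * 0 * p i j n m + 0 * 1 * p i j n n)).
  exact: defect_product_contraction_ge0.
by move=> i j; ring.
Qed.

Lemma defect_blocks_ge0 m n :
  0 <= defect (fun i j => p i j m m - p i j n n)
       + defect (fun i j => p i j m n) + defect (fun i j => p i j n m).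
Proof.
have phase_ge0 al be : al * be = -1 ->
    0 <= defect (fun i j => p i j m m + al * p i j m n + be * p i j n m - p i j n n).
  move=> albe; rewrite (eq_defect (N := fun i j => 1 * 1 * p i j m m + 1 * al * p i j m n
                                   + be * 1 * p i j n m + be * al * p i j n n)).
    exact: defect_product_contraction_ge0.
  by move=> i j; rewrite [be * al]mulrC albe; ring.
have ii : 'i * 'i = -1 :> C by rewrite -expr2 sqrCi.
rewrite -(@pmulr_rge0 _ 4) // -defect_four_phases.
apply: addr_ge0; [apply: addr_ge0; [apply: addr_ge0|]|]; apply: phase_ge0.
- by rewrite mulr1.
- exact: ii.
- by rewrite mul1r.
- by rewrite mulrNN ii.
Qed.

(* [2 d X - 2 U - d V + S] is [<psi| (2 - P12) (x) (d - P34) |psi>], and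
   [d - P34] is a positive combination of the projectors onto the product
   vectors used in [defect_block_ge0] and [defect_blocks_ge0]. *)
Lemma tensor_defect_ge0 : (0 < d)%N -> 0 <= 2 * d%:R * X - 2 * U - d%:R * V + S.
Proof.
move=> d_gt0.
pose G m n := defect (fun i j => p i j m n).
pose W m n := defect (fun i j => p i j m m - p i j n n) + G m n + G n m
               + 2 * (d%:R - 1) * G m n.
have W_ge0 m n : 0 <= W m n.
  apply: addr_ge0; first exact: defect_blocks_ge0.
  by rewrite mulr_ge0 ?defect_block_ge0 // mulr_ge0 // subr_ge0 ler1n.
have sumG : \sum_m \sum_n G m n = 2 * X - V.
  rewrite /G /defect; under eq_bigr do rewrite sumrB -mulr_sumr.
  by rewrite sumrB -mulr_sumr /sqnorm sum4_exchange [in RHS]sum_idx4.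
have sumGT : \sum_m \sum_n G n m = 2 * X - V by rewrite exchange_big.
have sumD : \sum_m \sum_n defect (fun i j => p i j m m - p i j n n) =
    2 * (d%:R * \sum_m G m m - (2 * U - S)).
  by rewrite (sum_defect_sub (fun m i j => p i j m m)) card_ord /defect -trace_contr34.
have Wdiag m : W m m = 2 * d%:R * G m m.
  rewrite /W (eq_defect (N := fun _ _ => 0)) ?defect0; first ring.
  by move=> i j; rewrite subrr.
have Wsum : \sum_m \sum_n W m n =
    2 * d%:R * \sum_m G m m + 2 * (2 * d%:R * X - 2 * U - d%:R * V + S).
  transitivity (\sum_m \sum_n defect (fun i j => p i j m m - p i j n n)
    + \sum_m \sum_n G m n + \sum_m \sum_n G n m
    + 2 * (d%:R - 1) * \sum_m \sum_n G m n); last by rewrite sumD sumG sumGT; ring.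
  rewrite mulr_sumr -!big_split; apply: eq_bigr => m _.
  by rewrite mulr_sumr -!big_split.
have Wsplit : \sum_m \sum_n W m n = \sum_m W m m + \sum_m \sum_(n | n != m) W m n.
  by rewrite -big_split; apply: eq_bigr => m _; rewrite (bigD1 m).
rewrite -(@pmulr_rge0 _ 2) //.
have <- : \sum_m \sum_(n | n != m) W m n = 2 * (2 * d%:R * X - 2 * U - d%:R * V + S).
  apply: (@addrI _ (2 * d%:R * \sum_m G m m)); rewrite -Wsum Wsplit mulr_sumr.
  by congr (_ + _); apply: eq_bigr => m _; rewrite Wdiag.
by apply: sumr_ge0 => m _; apply: sumr_ge0 => n _.
Qed.

Lemma rank2_contr_bound : (2 <= d)%N ->
  0 <= (4 * d%:R - 4) * X - d%:R * (U + V) + S.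
Proof.
move=> d_ge2; have := tensor_defect_ge0 (ltnW d_ge2).
have := sqnorm_contr34_le; rewrite -subr_ge0 => U_le F.
have d2 : 0 <= d%:R - 2 :> C by rewrite subr_ge0 (ler_nat _ 2 d).
rewrite (_ : _ - _ + _ = (2 * d%:R * X - 2 * U - d%:R * V + S) + (d%:R - 2) * (2 * X - U)).
  by rewrite addr_ge0 // mulr_ge0.
ring.
Qed.

End SchmidtRank2.

Lemma min0_mul_le (R : realDomainType) (a c t x : R) :
  0 <= x -> 0 <= t <= c * x -> Num.min (c * a) 0 * x <= a * t.
Proof.
move=> x0 /andP[t0 tc].
have m_ca : Num.min (c * a) 0 <= c * a by rewrite ge_min lexx.
have m_0 : Num.min (c * a) 0 <= 0 by rewrite ge_min lexx orbT.
case: (leP 0 a) => a0; nra.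
Qed.

Lemma rho_combination_ge0 (R : realFieldType) (dR eps del x w s : R) :
  0 < dR -> 0 <= x -> 0 <= s <= 2 * x -> 2 * s <= dR * w ->
  0 <= (4 * dR - 4) * x - dR * w + s ->
  ((1 - 2 / dR) ^+ 2 + Num.min (4 * eps) 0 + Num.min (2 * del) 0 >= 0
   \/ dR ^+ 2 + Num.min (4 * dR * (eps * dR - 1)) 0
        + Num.min (2 * (del * dR ^+ 2 - 1)) 0 >= 0) ->
  0 <= x + (eps * dR - 1) / dR * w + (1 - 2 * eps * dR + del * dR ^+ 2) / dR ^+ 2 * s.
Proof.
move=> d0 x0 /andP[s0 s2x] sw F4 cond.
have dx0 : 0 <= dR ^+ 2 * x by rewrite mulr_ge0 // exprn_ge0 // ltW.
pose t := dR * w - 2 * s.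
have t_bnd : 0 <= t <= 4 * dR * x by apply/andP; split; rewrite /t; lra.
have -> : x + (eps * dR - 1) / dR * w + (1 - 2 * eps * dR + del * dR ^+ 2) / dR ^+ 2 * s
    = (dR ^+ 2 * x + (eps * dR - 1) * t + (del * dR ^+ 2 - 1) * s) / dR ^+ 2.
  by rewrite /t; field; rewrite gt_eqF.
apply: divr_ge0; last by rewrite exprn_ge0 // ltW.
case: cond => cond.
- have /andP[t0 t_le] := t_bnd.
  have dt : 0 <= dR * t <= 4 * (dR ^+ 2 * x) by apply/andP; split; nra.
  have ds : 0 <= dR ^+ 2 * s <= 2 * (dR ^+ 2 * x) by apply/andP; split; nra.
  have h_eps := min0_mul_le eps dx0 dt.
  have h_del := min0_mul_le del dx0 ds.
  have e : (1 - 2 / dR) ^+ 2 * (dR ^+ 2 * x) = (dR - 2) ^+ 2 * x.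
    by field; rewrite gt_eqF.
  have := mulr_ge0 cond dx0; move: e h_eps; rewrite /t; lra.
- have h_eps := min0_mul_le (eps * dR - 1) x0 t_bnd.
  have h_del := min0_mul_le (del * dR ^+ 2 - 1) x0 (introT andP (conj s0 s2x)).
  have := mulr_ge0 cond x0; lra.
Qed.

Local Open Scope complex_scope.

Lemma qform_ptB_rho (R : rcfType) (d : nat) (eps del : R) (psi : vec4 R[i] d) :
  qform (ptB (rho eps del)) psi =
  \sum_k `|psi k| ^+ 2
  + ((eps * d%:R - 1) / d%:R)%:C * (sqnorm (contr34 psi) + sqnorm (contr12 psi))
  + ((1 - 2 * eps * d%:R + del * d%:R ^+ 2) / d%:R ^+ 2)%:C
    * `|trace (contr12 psi)| ^+ 2.
Proof. exact: qform_ptB_comb. Qed.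

Lemma rho_combination_ge0_complex (R : rcfType) (n : nat) (eps del : R)
    (x w s : R[i]) :
  (0 < n)%N -> 0 <= x -> 0 <= s -> s <= 2 * x -> 2 * s <= n%:R * w ->
  0 <= (4 * n%:R - 4) * x - n%:R * w + s ->
  ((1 - 2 / n%:R) ^+ 2 + Num.min (4 * eps) 0 + Num.min (2 * del) 0 >= 0
   \/ n%:R ^+ 2 + Num.min (4 * n%:R * (eps * n%:R - 1)) 0
        + Num.min (2 * (del * n%:R ^+ 2 - 1)) 0 >= 0) ->
  0 <= x + ((eps * n%:R - 1) / n%:R)%:C * w
       + ((1 - 2 * eps * n%:R + del * n%:R ^+ 2) / n%:R ^+ 2)%:C * s.
Proof.
move=> n_gt0 x0 s0 s2x sw F4 cond.
have w0 : 0 <= w.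
  by rewrite -(@pmulr_rge0 _ n%:R) ?ltr0n // (le_trans _ sw) // mulr_ge0.
have /complex_realP[x' xE] := ger0_real x0; subst x.
have /complex_realP[w' wE] := ger0_real w0; subst w.
have /complex_realP[s' sE] := ger0_real s0; subst s.
rewrite -!rmorphM -!rmorphD ler0c; apply: rho_combination_ge0 cond.
- by rewrite ltr0n.
- by rewrite -ler0c.
- by rewrite -ler0c -lecR rmorphM rmorph_nat s0 s2x.
- by rewrite -lecR !rmorphM !rmorph_nat.
- by rewrite -ler0c !(rmorphD, rmorphM, rmorphN, rmorph_nat).
Qed.

Theorem mainTheorem3 (R : rcfType) (d : nat) (eps del : R) :
  (2 <= d)%N ->
  psd (@rho R d eps del) ->
  ((1 - 2 / d%:R) ^+ 2 + Num.min (4 * eps) 0 + Num.min (2 * del) 0 >= 0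
   \/ d%:R ^+ 2 + Num.min (4 * d%:R * (eps * d%:R - 1)) 0
        + Num.min (2 * (del * d%:R ^+ 2 - 1)) 0 >= 0) ->
  one_undistillable (@rho R d eps del).
Proof.
move=> d_ge2 _ cond psi [a [b psiE]].
rewrite qform_ptB_rho; apply: rho_combination_ge0_complex cond.
- exact: ltnW.
- by rewrite sum_sqr_norm_ge0.
- by rewrite exprn_ge0.
- exact: sqr_norm_trace_contr12_le psiE.
- exact: sqr_norm_trace_contr12_le_sqnorm.
- exact: rank2_contr_bound psiE d_ge2.
Qed.
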